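(* For $n\geq 1$, $$P^{(\mathsf{inv}, \mathsf{exc})}(\mathfrak{D}_n(321); q, t)=\left(\frac{1+xt}{1+x}\right)^{n}P^{(\mathsf{inv}, \mathsf{cpk},\mathsf{exc})}\left(\mathfrak{D}_n(321); q, \frac{(1+x)^{2}t}{(x+t)(1+xt)},\frac{x+t}{1+xt}\right),$$ equivalently, $$P^{(\mathsf{inv}, \mathsf{cpk},\mathsf{exc})}(\mathfrak{D}_n(321); q, x,t)=\left(\frac{1+u}{1+uv}\right)^{n}P^{(\mathsf{inv}, \mathsf{exc})}(\mathfrak{D}_n(321); q, v),$$ where $u=\frac{1+t^{2}-2xt-(1-t)\sqrt{(1+t)^{2}-4xt}}{2(1-x)t}$ and $v=\frac{(1+t)^{2}-2xt-(1+t)\sqrt{(1+t)^{2}-4xt}}{2xt}$.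
   Context: $\mathfrak{D}_n(321)$ is the set of derangements of $[n]$ avoiding the pattern $321$. $P^{(\mathsf{stat}_1,\ldots,\mathsf{stat}_m)}(\Omega;t_1,\ldots,t_m)=\sum_{\sigma\in\Omega}\prod_jt_j^{\mathsf{stat}_j\sigma}$. $\mathsf{inv}$ is the inversion number, $\mathsf{exc}\,\sigma=\#\{i:\sigma(i)>i\}$, $\mathsf{cpk}\,\sigma=\#\{x:\sigma^{-1}(x)<x>\sigma(x)\}$. *)

From mathcomp Require Import all_boot all_order all_algebra all_fingroup.
Set Implicit Arguments.
Unset Strict Implicit.
Unset Printing Implicit Defensive.
Import Order.TTheory GRing.Theory Num.Theory.

(* Permutations of [n] are modelled as 'S_n (permutations of 'I_n = {0..n-1});
   all statistics below depend only on relative order, so the 0-based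
   indexing is harmless. *)

Section Stats.
Variable n : nat.
Implicit Type s : 'S_n.

Definition inv_stat s : nat :=
  #|[set p : 'I_n * 'I_n | (p.1 < p.2)%N && (s p.2 < s p.1)%N]|.

Definition exc_stat s : nat := #|[set i : 'I_n | (i < s i)%N]|.

Definition cpk_stat s : nat :=
  #|[set x : 'I_n | ((s^-1)%g x < x)%N && (s x < x)%N]|.

Definition is_derangement s : bool := [forall i, s i != i].

Definition avoids321 s : bool :=
  ~~ [exists i : 'I_n, exists j : 'I_n, exists k : 'I_n,
        [&& (i < j)%N, (j < k)%N, (s k < s j)%N & (s j < s i)%N]].

Definition D321 : {set 'S_n} := [set s | is_derangement s && avoids321 s].

End Stats.

Local Open Scope ring_scope.

Definition P_inv_exc (R : comNzRingType) (n : nat) (q t : R) : R :=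
  \sum_(s in D321 n) q ^+ inv_stat s * t ^+ exc_stat s.

Definition P_inv_cpk_exc (R : comNzRingType) (n : nat) (q x t : R) : R :=
  \sum_(s in D321 n) q ^+ inv_stat s * x ^+ cpk_stat s * t ^+ exc_stat s.

From mathcomp Require Import all_boot all_order all_algebra all_fingroup.
From mathcomp Require Import zify ring.
Import Order.TTheory GRing.Theory Num.Theory.
Set Implicit Arguments.
Unset Strict Implicit.
Unset Printing Implicit Defensive.

(* A 321-avoiding derangement s is determined by its set A of excedances and
   its set B = s(A) of excedance values: s maps A increasingly onto B and the
   complement of A increasingly onto the complement of B.  The pairs (A, B)
   that occur are exactly those satisfying two ballot conditions, and then
   exc s = |A|, cpk s = |B \ A| and inv s = sum B - sum A.  Adding to A and B
   a common set I outside A \cup B preserves the ballot conditions and inv, so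
   summing over I gives the gamma-expansion
     P(q, x, t) = sum_(A, B disjoint) q^(sum B - sum A) (xt)^|A| (1+t)^(n-2|A|).
   Multiplying it by c^n amounts to replacing (xt, 1+t) by (c^2 xt, c(1+t)),
   and both substitutions of the theorem leave this pair unchanged; in the
   second one c = (1+t+r)/2 and v = (1+t-r)/(1+t+r), r being the square root.
   The case n = 0 holds as well. *)

Lemma cardsU_disjoint (T : finType) (A B : {set T}) :
  [disjoint A & B] -> #|A :|: B| = #|A| + #|B|.
Proof. by move=> dAB; apply/eqP; rewrite (leq_card_setU A B).2. Qed.

Section Ranks.
Variable n : nat.
Implicit Types (S A I : {set 'I_n}) (i j k : 'I_n).

Definition rank_lt S k : nat := #|[set j in S | (j < k)%N]|.
Definition rank_le S k : nat := #|[set j in S | (j <= k)%N]|.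

Lemma card_ord_ltn m : (m <= n)%N -> #|[set j : 'I_n | (j < m)%N]| = m.
Proof.
move=> le_mn; have widen_inj : injective (widen_ord le_mn).
  by move=> a b /(congr1 val) ab; apply: val_inj.
rewrite -[RHS]card_ord -(card_imset _ widen_inj).
apply: eq_card => j; rewrite inE; apply/idP/imsetP => [j_lt_m | [i _ ->]].
  by exists (Ordinal j_lt_m); last exact: val_inj.
exact: (ltn_ord i).
Qed.

Lemma rank_leE S k : rank_le S k = rank_lt S k + (k \in S).
Proof.
rewrite /rank_le (cardsD1 k) inE leqnn andbT addnC; congr (_ + _).
by apply: eq_card => j; rewrite !inE ltn_neqAle andbCA.
Qed.

Lemma rank_lt_le_ord S k : (rank_lt S k <= k)%N.
Proof.
rewrite -[X in (_ <= X)%N](card_ord_ltn (ltnW (ltn_ord k))); apply: subset_leq_card.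
by apply/subsetP => j; rewrite !inE => /andP[].
Qed.

Lemma rank_ltU A I k :
  [disjoint A & I] -> rank_lt (A :|: I) k = rank_lt A k + rank_lt I k.
Proof.
move=> dAI; rewrite /rank_lt -cardsU_disjoint; last first.
  by apply: disjointW dAI; apply/subsetP => j; rewrite inE => /andP[].
by apply: eq_card => j; rewrite !inE andb_orl.
Qed.

Lemma rank_ltC S k : rank_lt (~: S) k = k - rank_lt S k.
Proof.
have rank_setT : rank_lt [set: 'I_n] k = k.
  by rewrite -[RHS](card_ord_ltn (ltnW (ltn_ord k))); apply: eq_card => j; rewrite !inE.
have := @rank_ltU S (~: S) k; rewrite -subsets_disjoint subxx setUCr rank_setT => /(_ isT) ->.
by rewrite addKn.
Qed.

Lemma leq_rank_lt S j k : (j <= k)%N -> (rank_lt S j <= rank_lt S k)%N.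
Proof.
move=> le_jk; apply/subset_leq_card/subsetP => i; rewrite !inE => /andP[-> /leq_trans]; exact.
Qed.

Lemma ltn_rank_lt S j k : (j < k)%N -> j \in S -> (rank_lt S j < rank_lt S k)%N.
Proof.
move=> lt_jk jS; have := rank_leE S j; rewrite jS addn1 => <-.
apply/subset_leq_card/subsetP => i; rewrite !inE => /andP[-> /leq_ltn_trans]; exact.
Qed.

Lemma rank_lt_homo S T (g : 'I_n -> 'I_n) :
  {in S, forall i, rank_lt T (g i) = rank_lt S i} -> {in S &, {homo g : i j / (i < j)%N}}.
Proof.
move=> gS i j iS jS /ltn_rank_lt/(_ iS); rewrite -!gS //.
by apply: contraTT; rewrite -!leqNgt; apply: leq_rank_lt.
Qed.

Lemma rank_lt_inj S : {in S &, injective (rank_lt S)}.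
Proof.
move=> i j iS jS eq_ij; apply: val_inj.
by case: (ltngtP i j) => // [/ltn_rank_lt/(_ iS) | /ltn_rank_lt/(_ jS)]; rewrite eq_ij ltnn.
Qed.

Lemma rank_lt_card S i : i \in S -> (rank_lt S i < #|S|)%N.
Proof.
move=> iS; have := rank_leE S i; rewrite iS addn1 => <-.
by apply/subset_leq_card/subsetP => j; rewrite inE => /andP[].
Qed.

Lemma rank_lt_onto S r : (r < #|S|)%N -> exists2 j, j \in S & rank_lt S j = r.
Proof.
move=> lt_rS; set ranks := [seq rank_lt S j | j <- enum S].
have ranks_uniq : uniq ranks.
  by rewrite map_inj_in_uniq ?enum_uniq // => i j; rewrite !mem_enum; apply: rank_lt_inj.
have ranks_sub : {subset ranks <= iota 0 #|S|}.
  by move=> m /mapP[j]; rewrite mem_enum mem_iota => jS ->; apply: rank_lt_card.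
have ranks_size : (size (iota 0 #|S|) <= size ranks)%N by rewrite size_map size_iota -cardE.
have [_ ranksE] := uniq_min_size ranks_uniq ranks_sub ranks_size.
have /mapP[j] : r \in ranks by rewrite ranksE mem_iota.
by rewrite mem_enum => jS ->; exists j.
Qed.

Definition rank_elem S r (d : 'I_n) : 'I_n := odflt d [pick j in S | rank_lt S j == r].

Lemma rank_elemP S r d :
  (r < #|S|)%N -> rank_elem S r d \in S /\ rank_lt S (rank_elem S r d) = r.
Proof.
rewrite /rank_elem; case: pickP => [j /andP[jS /eqP] // | no_j /rank_lt_onto[j jS jr]].
by have := no_j j; rewrite jS jr eqxx.
Qed.

Lemma rank_elemK S j d : j \in S -> rank_elem S (rank_lt S j) d = j.
Proof.
move=> jS; have [elem_S elem_rank] := rank_elemP d (rank_lt_card jS).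
exact: rank_lt_inj elem_S jS elem_rank.
Qed.

End Ranks.

Section Admissible.
Variable n : nat.
Implicit Types (A B I : {set 'I_n}) (k : 'I_n).

(* Equivalently: |A| = |B|, the m-th smallest element of A is smaller than the
   m-th smallest element of B, and the m-th smallest element of ~: B is smaller
   than the m-th smallest element of ~: A. *)
Definition admissible A B : bool :=
  [&& #|A| == #|B|,
      [forall k, (rank_le B k <= rank_lt A k)%N] &
      [forall k, (rank_le (~: A) k <= rank_lt (~: B) k)%N]].

Lemma admissible_rank A B : admissible A B =
  (#|A| == #|B|) && [forall k, (rank_lt B k + (k \in B :|: ~: A) <= rank_lt A k)%N].
Proof.
have at_k k : ((rank_le B k <= rank_lt A k) && (rank_le (~: A) k <= rank_lt (~: B) k))%N =
              (rank_lt B k + (k \in B :|: ~: A) <= rank_lt A k)%N.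
  rewrite !rank_leE !rank_ltC !inE.
  have := rank_lt_le_ord A k; have := rank_lt_le_ord B k.
  by case: (k \in A); case: (k \in B) => /= ? ?; apply/andP/idP => [[] | ]; lia.
rewrite /admissible; congr (_ && _).
apply/andP/forallP => [[/forallP le1 /forallP le2] k | le12]; first by rewrite -at_k le1 le2.
by split; apply/forallP => k; have := le12 k; rewrite -at_k => /andP[].
Qed.

Lemma admissibleU A B I : [disjoint I & A :|: B] ->
  admissible (A :|: I) (B :|: I) = admissible A B.
Proof.
move=> dI; have dAI : [disjoint A & I].
  by rewrite disjoint_sym (disjointWr (subsetUl A B) dI).
have dBI : [disjoint B & I] by rewrite disjoint_sym (disjointWr (subsetUr A B) dI).
rewrite !admissible_rank !cardsU_disjoint // eqn_add2r; congr (_ && _).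
apply: eq_forallb => k; rewrite !rank_ltU // addnAC leq_add2r !inE.
case kI: (k \in I); last by rewrite !orbF.
by rewrite (disjointFl dAI kI) (disjointFl dBI kI).
Qed.

End Admissible.

Section Excedances.
Variable n : nat.
Implicit Types (s : 'S_n) (S T : {set 'I_n}) (i j k : 'I_n).

Definition exc_set s : {set 'I_n} := [set i : 'I_n | (i < s i)%N].
Definition exc_vals s : {set 'I_n} := s @: exc_set s.

Lemma mem_exc_vals s i : (s i \in exc_vals s) = (i \in exc_set s).
Proof. exact/mem_imset/perm_inj. Qed.

Lemma derangement_ltnE s i : is_derangement s -> (s i < i)%N = (i \notin exc_set s).
Proof.
move=> /forallP/(_ i) si_neq_i; rewrite inE -leqNgt [RHS]leq_eqVlt.
by case: eqP => // si_eq_i; rewrite (val_inj si_eq_i) eqxx in si_neq_i.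
Qed.

Lemma admissible_exc s : is_derangement s -> admissible (exc_set s) (exc_vals s).
Proof.
move=> der_s; apply/and3P; split.
- by rewrite card_imset //; apply: perm_inj.
- apply/forallP => k; apply: leq_trans (leq_imset_card s _); apply/subset_leq_card/subsetP.
  move=> _ /[!inE] /andP[/imsetP[a aA ->] sa_le_k]; apply: imset_f.
  by rewrite inE aA (leq_trans _ sa_le_k) //; rewrite inE in aA.
- apply/forallP => k; rewrite /rank_le -(card_imset _ (@perm_inj _ s)).
  apply/subset_leq_card/subsetP => _ /imsetP[a /[!inE] /andP[aA a_le_k] ->].
  have sa_lt_a : (s a < a)%N by rewrite derangement_ltnE // inE.
  by rewrite mem_exc_vals inE aA (leq_trans sa_lt_a).
Qed.

Lemma exc_inversion s j : (j < s j)%N -> exists2 k : 'I_n, (j < k)%N & (s k < s j)%N.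
Proof.
move=> j_lt_sj; apply/exists_inP; apply: contraLR j_lt_sj => /exists_inPn no_inv.
rewrite -leqNgt -ltnS -[X in (X <= _)%N](card_ord_ltn (ltn_ord (s j))).
rewrite -(card_ord_ltn (ltn_ord j)) -(card_preimset _ (@perm_inj _ s)).
apply/subset_leq_card/subsetP => k /[!inE]; rewrite !ltnS.
apply: contraTT; rewrite -!ltnNge => j_lt_k.
rewrite ltn_neqAle leqNgt (no_inv _ j_lt_k) andbT.
by apply: contraTneq j_lt_k => /val_inj/perm_inj ->; rewrite ltnn.
Qed.

Lemma nonexc_inversion s i : (s i < i)%N -> exists2 k : 'I_n, (k < i)%N & (s i < s k)%N.
Proof.
move=> si_lt_i; have [|k si_lt_k] := @exc_inversion (s^-1)%g (s i); rewrite permK //.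
by move=> s'k_lt_i; exists ((s^-1)%g k); rewrite ?permKV.
Qed.

Lemma perm_homo_mono s S :
  {in S &, {homo s : i j / (i < j)%N}} -> {in S &, {mono s : i j / (i < j)%N}}.
Proof.
move=> s_homo i j iS jS.
case: (ltngtP i j) => [/(s_homo i j iS jS) -> // | j_lt_i | /val_inj ->].
  by apply/negbTE; rewrite -leqNgt ltnW // s_homo.
by rewrite ltnn.
Qed.

Lemma avoids321_pattern s i j k : avoids321 s ->
  (i < j)%N -> (j < k)%N -> (s k < s j)%N -> (s j < s i)%N -> False.
Proof.
move=> /negP no_pattern i_lt_j j_lt_k sk_lt_sj sj_lt_si; apply: no_pattern.
by apply/existsP; exists i; apply/existsP; exists j; apply/existsP; exists k; apply/and4P.
Qed.

Lemma exc_mono s : avoids321 s -> {in exc_set s &, {mono s : i j / (i < j)%N}}.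
Proof.
move=> av_s; apply: perm_homo_mono => i j _ /[!inE] j_exc i_lt_j.
case: (ltngtP (s i) (s j)) => // [sj_lt_si | /val_inj/perm_inj eq_ij]; last first.
  by move: i_lt_j; rewrite eq_ij ltnn.
have [k j_lt_k sk_lt_sj] := exc_inversion j_exc.
by case: (avoids321_pattern av_s i_lt_j j_lt_k sk_lt_sj sj_lt_si).
Qed.

Lemma nonexc_mono s : is_derangement s -> avoids321 s ->
  {in ~: exc_set s &, {mono s : i j / (i < j)%N}}.
Proof.
move=> der_s av_s; apply: perm_homo_mono => i j /[!in_setC] i_nonexc _ i_lt_j.
case: (ltngtP (s i) (s j)) => // [sj_lt_si | /val_inj/perm_inj eq_ij]; last first.
  by move: i_lt_j; rewrite eq_ij ltnn.
have [|k k_lt_i si_lt_sk] := @nonexc_inversion s i; first by rewrite derangement_ltnE.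
by case: (avoids321_pattern av_s k_lt_i i_lt_j sj_lt_si si_lt_sk).
Qed.

Lemma rank_lt_perm s S T i : (forall j, (s j \in T) = (j \in S)) ->
  {in S &, {mono s : a b / (a < b)%N}} -> i \in S -> rank_lt T (s i) = rank_lt S i.
Proof.
move=> memT s_mono iS; rewrite /rank_lt -(card_preimset _ (@perm_inj _ s)).
by apply: eq_card => j; rewrite !inE memT; case jS: (j \in S) => //=; apply: s_mono.
Qed.

(* The m-th smallest element of A goes to the m-th smallest element of B, and
   likewise for the complements; the default [i] is never used when (A, B) is
   admissible. *)
Definition excedance_fun (A B : {set 'I_n}) i : 'I_n :=
  if i \in A then rank_elem B (rank_lt A i) i else rank_elem (~: B) (rank_lt (~: A) i) i.

Lemma excedance_funE s : s \in D321 n -> s =1 excedance_fun (exc_set s) (exc_vals s).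
Proof.
rewrite inE => /andP[der_s av_s] i; rewrite /excedance_fun; case: ifPn => i_exc.
  by rewrite -(rank_lt_perm (mem_exc_vals s) (exc_mono av_s) i_exc) rank_elemK ?mem_exc_vals.
have mem_nonexc j : (s j \in ~: exc_vals s) = (j \in ~: exc_set s).
  by rewrite !in_setC mem_exc_vals.
rewrite -(rank_lt_perm mem_nonexc (nonexc_mono der_s av_s)) ?in_setC // rank_elemK //.
by rewrite mem_nonexc in_setC.
Qed.

Lemma exc_pair_inj : {in D321 n &, injective (fun s => (exc_set s, exc_vals s))}.
Proof.
move=> s1 s2 s1D s2D [eq_exc eq_vals]; apply/permP => i.
by rewrite (excedance_funE s1D) (excedance_funE s2D) eq_exc eq_vals.
Qed.

End Excedances.

Section Construction.
Variables (n : nat) (A B : {set 'I_n}).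
Hypothesis AB : admissible A B.
Implicit Types i j k : 'I_n.

Local Notation f := (excedance_fun A B).

Lemma excedance_fun_exc i : i \in A -> f i \in B /\ rank_lt B (f i) = rank_lt A i.
Proof.
move: AB => /and3P[/eqP cardAB _ _] iA; rewrite /excedance_fun iA.
by apply: rank_elemP; rewrite -cardAB rank_lt_card.
Qed.

Lemma excedance_fun_nonexc i :
  i \notin A -> f i \in ~: B /\ rank_lt (~: B) (f i) = rank_lt (~: A) i.
Proof.
move: AB => /and3P[/eqP cardAB _ _] iA; rewrite /excedance_fun (negbTE iA).
have cardC : #|~: A| = #|~: B| by apply/eqP; rewrite -(eqn_add2l #|A|) cardsC cardAB cardsC.
by apply: rank_elemP; rewrite -cardC rank_lt_card ?in_setC.
Qed.

Lemma excedance_fun_inj : injective f.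
Proof.
move=> i j; have [iA | iA] := boolP (i \in A); have [jA | jA] := boolP (j \in A).
- have [_ ri] := excedance_fun_exc iA; have [_ rj] := excedance_fun_exc jA.
  by move=> eq_f; apply: (rank_lt_inj iA jA); rewrite -ri -rj eq_f.
- have [fiB _] := excedance_fun_exc iA; have [fjB _] := excedance_fun_nonexc jA.
  by move=> eq_f; move: fjB; rewrite -eq_f in_setC fiB.
- have [fiB _] := excedance_fun_nonexc iA; have [fjB _] := excedance_fun_exc jA.
  by move=> eq_f; move: fiB; rewrite eq_f in_setC fjB.
- have [_ ri] := excedance_fun_nonexc iA; have [_ rj] := excedance_fun_nonexc jA.
  by move=> eq_f; apply: (@rank_lt_inj _ (~: A)); rewrite ?in_setC // -ri -rj eq_f.
Qed.

Lemma excedance_fun_gt i : i \in A -> (i < f i)%N.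
Proof.
move=> iA; have [fiB rank_fi] := excedance_fun_exc iA.
move: AB; rewrite admissible_rank => /andP[_ /forallP/(_ (f i))].
rewrite inE fiB rank_fi addn1; apply: contraTT; rewrite -!leqNgt; exact: leq_rank_lt.
Qed.

Lemma excedance_fun_lt i : i \notin A -> (f i < i)%N.
Proof.
move=> iA; have [_ rank_fi] := excedance_fun_nonexc iA.
move: AB; rewrite admissible_rank => /andP[_ /forallP/(_ i)]; rewrite !inE iA orbT addn1.
move=> rB_lt_rA; rewrite ltnNge; apply: contraTN rB_lt_rA => /(leq_rank_lt (~: B)).
rewrite rank_fi !rank_ltC.
have := rank_lt_le_ord A i; have := rank_lt_le_ord B i; lia.
Qed.

Definition excedance_perm : 'S_n := perm excedance_fun_inj.

Lemma exc_set_excedance_perm : exc_set excedance_perm = A.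
Proof.
apply/setP => i; rewrite inE permE.
have [/excedance_fun_gt -> // | /excedance_fun_lt/ltnW] := boolP (i \in A).
by rewrite leqNgt => /negbTE.
Qed.

Lemma exc_vals_excedance_perm : exc_vals excedance_perm = B.
Proof.
move: AB => /and3P[/eqP cardAB _ _].
apply/eqP; rewrite eqEcard /exc_vals exc_set_excedance_perm.
rewrite card_imset ?cardAB ?leqnn ?andbT; last exact: perm_inj.
by apply/subsetP => _ /imsetP[a aA ->]; rewrite permE; case: (excedance_fun_exc aA).
Qed.

Lemma excedance_perm_D321 : excedance_perm \in D321 n.
Proof.
rewrite inE; apply/andP; split.
  apply/forallP => i; rewrite permE; apply/eqP => fi_eq_i.
  have [/excedance_fun_gt | /excedance_fun_lt] := boolP (i \in A); by rewrite fi_eq_i ltnn.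
have homoA : {in A &, {homo f : i j / (i < j)%N}}.
  by apply: (@rank_lt_homo _ _ B) => i /excedance_fun_exc[].
have homoC : {in ~: A &, {homo f : i j / (i < j)%N}}.
  by apply: (@rank_lt_homo _ _ (~: B)) => i /[!in_setC] /excedance_fun_nonexc[].
apply/negP => /existsP[i /existsP[j /existsP[k /and4P[i_lt_j j_lt_k]]]]; rewrite !permE.
have [jA | jA] := boolP (j \in A).
  have [iA | iA] := boolP (i \in A); first by have := homoA i j iA jA i_lt_j; lia.
  by have := excedance_fun_lt iA; have := excedance_fun_gt jA; lia.
have [kA | kA] := boolP (k \in A).
  by have := excedance_fun_lt jA; have := excedance_fun_gt kA; lia.
by have := homoC j k; rewrite !in_setC => /(_ jA kA j_lt_k); lia.
Qed.

End Construction.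

Lemma exc_pairs_D321 n :
  [set (exc_set s, exc_vals s) | s in D321 n] = [set p | admissible p.1 p.2].
Proof.
apply/setP => -[A B]; rewrite inE; apply/imsetP/idP => [[s] | AB].
  by rewrite inE => /andP[der_s _] [-> ->]; apply: admissible_exc.
exists (excedance_perm AB); first exact: excedance_perm_D321.
by rewrite exc_set_excedance_perm exc_vals_excedance_perm.
Qed.

Section Statistics.
Variable n : nat.
Implicit Types (s : 'S_n) (i j : 'I_n).

Lemma cpk_stat_exc s : is_derangement s -> cpk_stat s = #|exc_vals s :\: exc_set s|.
Proof.
move=> der_s; apply: eq_card => x; rewrite -[x](permKV s) !inE mem_exc_vals permK.
by rewrite derangement_ltnE // !inE andbC.
Qed.

Lemma inversions_from s i : is_derangement s -> avoids321 s ->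
  #|[set j : 'I_n | (i < j)%N && (s j < s i)%N]| = if i \in exc_set s then s i - i else 0.
Proof.
move=> der_s av_s; case: ifPn => i_exc.
  have below_si : [set j : 'I_n | (s j < s i)%N] =
      [set j : 'I_n | (i < j)%N && (s j < s i)%N] :|: [set j : 'I_n | (j < i)%N].
    apply/setP => j; rewrite !inE.
    case: (ltngtP i j) => [_ | j_lt_i | /val_inj ->]; rewrite ?orbF ?ltnn //.
    have [j_exc | j_nonexc] := boolP (j \in exc_set s).
      by rewrite (exc_mono av_s) ?j_lt_i.
    rewrite inE in i_exc; rewrite -derangement_ltnE // in j_nonexc; lia.
  have card_below : #|[set j : 'I_n | (s j < s i)%N]| = s i.
    transitivity #|s @^-1: [set v : 'I_n | (v < s i)%N]|.
      by apply: eq_card => j; rewrite !inE.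
    by rewrite card_preimset ?card_ord_ltn 1?ltnW //; apply: perm_inj.
  move: card_below; rewrite below_si cardsU_disjoint ?(card_ord_ltn (ltnW (ltn_ord i))).
    by rewrite inE in i_exc; lia.
  by rewrite -setI_eq0; apply/eqP/setP => j; rewrite !inE; apply/negbTE; lia.
apply/eqP; rewrite cards_eq0; apply/eqP/setP => j; rewrite !inE.
apply/negbTE/negP => /andP[i_lt_j sj_lt_si].
have si_lt_i : (s i < i)%N by rewrite derangement_ltnE.
have [j_exc | j_nonexc] := boolP (j \in exc_set s); first by rewrite inE in j_exc; lia.
by move: sj_lt_si; rewrite (nonexc_mono der_s av_s) ?in_setC //; lia.
Qed.

Definition exc_weight (A B : {set 'I_n}) : nat := (\sum_(j in B) j - \sum_(i in A) i)%N.

Lemma inv_stat_exc s : s \in D321 n -> inv_stat s = exc_weight (exc_set s) (exc_vals s).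
Proof.
rewrite inE => /andP[der_s av_s]; rewrite /inv_stat -sum1_card.
transitivity (\sum_(i : 'I_n) \sum_(j : 'I_n | (i < j)%N && (s j < s i)%N) 1)%N.
  by rewrite pair_big_dep; apply: eq_bigl => -[i j]; rewrite inE.
rewrite (eq_bigr (fun i => if i \in exc_set s then s i - i else 0)%N) => [|i _]; last first.
  by rewrite -inversions_from // -sum1_card; apply: eq_bigl => j; rewrite inE.
rewrite -big_mkcond /= sumnB => [|i]; last by rewrite inE => /ltnW.
by rewrite /exc_weight big_imset //; apply: in2W; apply: perm_inj.
Qed.

End Statistics.

Local Open Scope ring_scope.

Lemma sum_subsets_expr (R : comNzRingType) (T : finType) (W : {set T}) (t : R) :
  \sum_(I : {set T} | I \subset W) t ^+ #|I| = (1 + t) ^+ #|W|.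
Proof.
rewrite addrC exprD1n (partition_big (fun I : {set T} => inord #|I| : 'I_#|W|.+1) xpredT) //=.
apply: eq_bigr => k _; rewrite -cards_draws -sumr_const.
apply: eq_big => [I | I /andP[sub_IW /eqP <-]].
  rewrite inE; case: (boolP (I \subset W)) => //= /subset_leq_card le_IW.
  by apply/eqP/eqP => [<- | eq_k]; [rewrite inordK | apply: val_inj; rewrite /= inordK].
by rewrite inordK // ltnS subset_leq_card.
Qed.

Section Regrouping.
Variable n : nat.
Implicit Types (A B I : {set 'I_n}) (p r : {set 'I_n} * {set 'I_n}).

Definition reduced r : bool := admissible r.1 r.2 && [disjoint r.1 & r.2].
Definition free_part r : {set 'I_n} := ~: (r.1 :|: r.2).
Definition core p := (p.1 :\: p.2, p.2 :\: p.1).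

Lemma core_reduced p : admissible p.1 p.2 -> reduced (core p).
Proof.
case: p => A B /= adm_AB; rewrite /reduced /=.
have -> : [disjoint A :\: B & B :\: A].
  by rewrite -setI_eq0; apply/eqP/setP => x; rewrite !inE; case: (x \in A); case: (x \in B).
rewrite andbT -(@admissibleU _ _ _ (A :&: B)).
  by rewrite setUC setID setIC setUC setID.
by rewrite -setI_eq0; apply/eqP/setP => x; rewrite !inE; case: (x \in A); case: (x \in B).
Qed.

Lemma setU_common_core A B I : [disjoint A & B] -> [disjoint I & A :|: B] ->
  [/\ (A :|: I) :\: (B :|: I) = A, (B :|: I) :\: (A :|: I) = B & (A :|: I) :&: (B :|: I) = I].
Proof.
move=> dAB dI; have memI x : x \in I -> (x \in A) = false /\ (x \in B) = false.
  by move=> /(disjointFr dI); rewrite inE => /norP[/negbTE-> /negbTE->].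
split; apply/setP => x; rewrite !inE; have [/memI[-> ->] | _] //= := boolP (x \in I).
all: rewrite !orbF; case xA: (x \in A); rewrite ?andbF ?andbT ?(disjointFr dAB xA) //.
Qed.

Lemma sum_admissible (R : nmodType) (F : {set 'I_n} * {set 'I_n} -> R) :
  \sum_(p | admissible p.1 p.2) F p =
  \sum_(r | reduced r) \sum_(I : {set 'I_n} | I \subset free_part r) F (r.1 :|: I, r.2 :|: I).
Proof.
rewrite (partition_big core reduced) => [|p]; last exact: core_reduced.
apply: eq_bigr => -[A B] /andP[adm_AB dAB].
rewrite (reindex_onto (fun I => (A :|: I, B :|: I)) (fun p => p.1 :&: p.2)) /=; last first.
  by move=> [A' B'] /andP[_ /eqP[<- <-]]; rewrite setUC setID setIC setUC setID.
apply: eq_bigl => I; rewrite /core /=.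
apply/idP/idP => [/andP[/andP[_ /eqP[eqA eqB]] _] | sub_I].
  apply/subsetP => x xI; move/setP/(_ x): eqA; move/setP/(_ x): eqB.
  by rewrite !inE xI !orbT /= => <- <-.
have dI : [disjoint I & A :|: B] by rewrite disjoints_subset.
have [-> -> ->] := setU_common_core dAB dI.
by rewrite admissibleU // adm_AB !eqxx.
Qed.

Lemma exc_weightU A B I : [disjoint I & A :|: B] ->
  exc_weight (A :|: I) (B :|: I) = exc_weight A B.
Proof.
move=> dI; have dAI : [disjoint A & I].
  by rewrite disjoint_sym (disjointWr (subsetUl A B) dI).
have dBI : [disjoint B & I] by rewrite disjoint_sym (disjointWr (subsetUr A B) dI).
have sumU (C : {set 'I_n}) : [disjoint C & I] ->
    (\sum_(j in C :|: I) j = \sum_(j in C) j + \sum_(j in I) j)%N.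
  by move=> dCI; rewrite -bigU //; apply: eq_bigl => j; rewrite inE.
by rewrite /exc_weight !sumU // subnDr.
Qed.

Lemma reduced_card r :
  reduced r -> #|r.1| = #|r.2| /\ (2 * #|r.1| + #|free_part r| = n)%N.
Proof.
case/andP=> /and3P[/eqP card12 _ _] d12; split => //.
by rewrite -[RHS](card_ord n) -(cardsC (r.1 :|: r.2)) cardsU_disjoint // -card12 mul2n addnn.
Qed.

Definition gamma_sum (R : comNzRingType) (q y z : R) : R :=
  \sum_(r | reduced r) q ^+ exc_weight r.1 r.2 * y ^+ #|r.1| * z ^+ #|free_part r|.

Lemma gamma_sum_scale (R : comNzRingType) (c q y z : R) :
  c ^+ n * gamma_sum q y z = gamma_sum q (c ^+ 2 * y) (c * z).
Proof.
rewrite mulr_sumr; apply: eq_bigr => r /reduced_card[_ n_eq].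
by rewrite -[X in c ^+ X]n_eq exprD exprM !exprMn; ring.
Qed.

Lemma P_inv_cpk_exc_admissible (R : comNzRingType) (q x t : R) :
  P_inv_cpk_exc n q x t =
  \sum_(p : {set 'I_n} * {set 'I_n} | admissible p.1 p.2)
     q ^+ exc_weight p.1 p.2 * x ^+ #|p.2 :\: p.1| * t ^+ #|p.1|.
Proof.
transitivity (\sum_(p in [set (exc_set s, exc_vals s) | s in D321 n])
    q ^+ exc_weight p.1 p.2 * x ^+ #|p.2 :\: p.1| * t ^+ #|p.1|); last first.
  by rewrite exc_pairs_D321; apply: eq_bigl => p; rewrite inE.
rewrite big_imset /=; last exact: exc_pair_inj.
apply: eq_bigr => s sD; have /[!inE] /andP[der_s _] := sD.
by rewrite inv_stat_exc // cpk_stat_exc.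
Qed.

Lemma P_inv_cpk_exc_gamma (R : comNzRingType) (q x t : R) :
  P_inv_cpk_exc n q x t = gamma_sum q (x * t) (1 + t).
Proof.
rewrite P_inv_cpk_exc_admissible sum_admissible; apply: eq_bigr => -[A B] red_AB /=.
have [card12 _] := reduced_card red_AB; have /andP[_ dAB] := red_AB.
rewrite -sum_subsets_expr mulr_sumr; apply: eq_bigr => I sub_I.
have dI : [disjoint I & A :|: B] by rewrite disjoints_subset.
have [_ -> _] := setU_common_core dAB dI.
rewrite exc_weightU // cardsU_disjoint /=; last first.
  by rewrite disjoint_sym (disjointWr (subsetUl A B) dI).
by rewrite -card12 exprD exprMn !mulrA.
Qed.

Lemma P_inv_exc_gamma (R : comNzRingType) (q t : R) :
  P_inv_exc n q t = gamma_sum q t (1 + t).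
Proof.
rewrite -[t in gamma_sum _ t](mul1r t) -P_inv_cpk_exc_gamma.
by apply: eq_bigr => s _; rewrite expr1n mulr1.
Qed.

End Regrouping.

Section SquareRootParametrization.
Variables (F : numFieldType) (x t r u v : F).
Hypotheses (x_neq0 : x != 0) (x_neq1 : x != 1) (t_neq0 : t != 0).
Hypothesis r_sqr : r ^+ 2 = (1 + t) ^+ 2 - 4 * x * t.
Hypothesis u_def : u = (1 + t ^+ 2 - 2 * x * t - (1 - t) * r) / (2 * (1 - x) * t).
Hypothesis v_def : v = ((1 + t) ^+ 2 - 2 * x * t - (1 + t) * r) / (2 * x * t).

Let two_neq0 : (2 : F) != 0. Proof. by rewrite pnatr_eq0. Qed.
Let one_sub_x_neq0 : 1 - x != 0. Proof. by rewrite subr_eq0 eq_sym. Qed.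

Lemma addr_sqrt_neq0 : 1 + t + r != 0.
Proof.
apply: contra x_neq0 => /eqP r_opp.
have : 4 * x * t = (1 + t + r) * (1 + t - r).
  by transitivity ((1 + t) ^+ 2 - r ^+ 2); [rewrite r_sqr | ]; ring.
by rewrite r_opp mul0r => /eqP; rewrite !mulf_eq0 pnatr_eq0 (negbTE t_neq0) orbF.
Qed.

Lemma subr_sqrt_neq0 : r + 1 - t != 0.
Proof.
apply: contra one_sub_x_neq0 => /eqP r_eq.
have : 4 * (1 - x) * t = (r + 1 - t) * (r - 1 + t).
  by transitivity (r ^+ 2 - (1 - t) ^+ 2); [rewrite r_sqr | ]; ring.
by rewrite r_eq mul0r => /eqP; rewrite !mulf_eq0 pnatr_eq0 (negbTE t_neq0) orbF.
Qed.

Lemma u_closed : u = (r - 1 + t) / (r + 1 - t).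
Proof.
rewrite u_def; apply/eqP; rewrite eqr_div ?mulf_neq0 ?subr_sqrt_neq0 //; apply/eqP.
transitivity ((r - 1 + t) * (2 * (1 - x) * t) +
              (1 - t) * ((1 + t) ^+ 2 - 4 * x * t - r ^+ 2)); first ring.
by rewrite r_sqr subrr mulr0 addr0.
Qed.

Lemma v_closed : v = (1 + t - r) / (1 + t + r).
Proof.
rewrite v_def; apply/eqP; rewrite eqr_div ?mulf_neq0 ?addr_sqrt_neq0 //; apply/eqP.
transitivity ((1 + t - r) * (2 * x * t) +
              (1 + t) * ((1 + t) ^+ 2 - 4 * x * t - r ^+ 2)); first ring.
by rewrite r_sqr subrr mulr0 addr0.
Qed.

Lemma parametrization_scale : 1 + u * v != 0 ->
  (1 + u) / (1 + u * v) = (1 + t + r) / 2.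
Proof.
move=> uv_neq0; apply/eqP; rewrite eqr_div // u_closed v_closed; apply/eqP.
by field; rewrite addr_sqrt_neq0 subr_sqrt_neq0.
Qed.

Lemma parametrization_eqs : 1 + u * v != 0 ->
  ((1 + u) / (1 + u * v)) ^+ 2 * v = x * t /\ (1 + u) / (1 + u * v) * (1 + v) = 1 + t.
Proof.
move=> /parametrization_scale ->; rewrite v_closed; split.
  transitivity (((1 + t) ^+ 2 - r ^+ 2) / 4); first by field; rewrite addr_sqrt_neq0.
  by rewrite r_sqr; field.
by field; rewrite addr_sqrt_neq0.
Qed.

End SquareRootParametrization.

Unset Implicit Arguments.
Set Strict Implicit.

Theorem corollary3p8 (n : nat) (hn : (1 <= n)%N) :
  (* first form: identity of rational functions, stated at every point of
     any field where the denominators do not vanish *)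
  (forall (F : fieldType) (q x t : F),
      1 + x != 0 -> x + t != 0 -> 1 + x * t != 0 ->
      P_inv_exc n q t =
        ((1 + x * t) / (1 + x)) ^+ n *
        P_inv_cpk_exc n q ((1 + x) ^+ 2 * t / ((x + t) * (1 + x * t)))
                          ((x + t) / (1 + x * t))) /\
  (* second form, with the square root of a real closed field *)
  (forall (R : rcfType) (q x t : R),
      x != 0 -> x != 1 -> t != 0 -> 0 <= (1 + t) ^+ 2 - 4 * x * t ->
      let r := Num.sqrt ((1 + t) ^+ 2 - 4 * x * t) in
      let u := (1 + t ^+ 2 - 2 * x * t - (1 - t) * r) / (2 * (1 - x) * t) in
      let v := ((1 + t) ^+ 2 - 2 * x * t - (1 + t) * r) / (2 * x * t) in
      1 + u * v != 0 ->
      P_inv_cpk_exc n q x t = ((1 + u) / (1 + u * v)) ^+ n * P_inv_exc n q v).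
Proof.
split=> [F q x t x1_neq0 xt_neq0 xt1_neq0 | R q x t x_neq0 x_neq1 t_neq0 disc_ge0 r u v].
  rewrite P_inv_exc_gamma P_inv_cpk_exc_gamma gamma_sum_scale.
  by congr gamma_sum; field; rewrite ?x1_neq0 ?xt_neq0 ?xt1_neq0.
have r_sqr : r ^+ 2 = (1 + t) ^+ 2 - 4 * x * t by rewrite sqr_sqrtr.
move=> /(parametrization_eqs x_neq0 x_neq1 t_neq0 r_sqr (erefl u) (erefl v)).
case=> scale_xt scale_1t.
by rewrite P_inv_cpk_exc_gamma P_inv_exc_gamma gamma_sum_scale scale_xt scale_1t.
Qed.
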